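(* Let $X$ be a smooth Minkowski plane and $A\subset X$ finite with $|A|$ even. If $\mathrm{FT}(A)$ intersects the boundary of $\operatorname{conv}A$, then $A$ is a double cluster or a pseudo double cluster.
   Context: A Minkowski plane is a two-dimensional real normed space $(X,\|\cdot\|)$ with unit ball $B$; it is smooth if every boundary point of $B$ has a unique supporting line. A proper exposed face of $B$ is the intersection of $B$ with a supporting line. For finite $A$, $\mathrm{FT}(A)$ is the set of minimizers of $\mathbf{x}\mapsto\sum_{\mathbf{a}\in A}\|\mathbf{x}-\mathbf{a}\|$ (Fermat-Torricelli points). A set $C=\{\mathbf{x}_1,\dots,\mathbf{x}_m,\mathbf{y}_1,\dots,\mathbf{y}_m\}$ is a double cluster with pairs $\mathbf{x}_i,\mathbf{y}_i$ if all $\frac{\mathbf{x}_i-\mathbf{y}_i}{\|\mathbf{x}_i-\mathbf{y}_i\|}$ lie in the same proper exposed face of $B$. A pseudo double cluster is the union of a double cluster $C$, a Fermat-Torricelli point of $C$ (its centre), and one further arbitrary point. *)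

(* the Minkowski plane is R^2 = 'rV[R]_2 over R : realType,
   equipped with an arbitrary norm N. *)
From HB Require Import structures.
From mathcomp Require Import all_boot all_order all_algebra.
From mathcomp Require Import reals.
Set Implicit Arguments. Unset Strict Implicit. Unset Printing Implicit Defensive.
Import Order.TTheory GRing.Theory Num.Theory.
Local Open Scope ring_scope.

Section Minkowski.
Variable R : realType.
Notation pt := ('rV[R]_2).

Definition is_norm (N : pt -> R) : Prop :=
  [/\ forall x, N x = 0 -> x = 0,
      forall (a : R) x, N (a *: x) = `|a| * N x &
      forall x y, N (x + y) <= N x + N y].

(* the linear functional x |-> <x, w> (every linear functional on R^2 has this form) *)
Definition dotp (x w : pt) : R := \sum_(i < 2) x 0 i * w 0 i.

Definition unit_ball (N : pt -> R) (b : pt) : Prop := N b <= 1.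

Definition supporting_line (N : pt -> R) (w : pt) (al : R) : Prop :=
  [/\ w != 0,
      forall b, unit_ball N b -> dotp b w <= al &
      exists b, unit_ball N b /\ dotp b w = al].

Definition smooth (N : pt -> R) : Prop :=
  forall u, N u = 1 ->
  forall w1 al1 w2 al2,
    supporting_line N w1 al1 -> dotp u w1 = al1 ->
    supporting_line N w2 al2 -> dotp u w2 = al2 ->
    (forall x, dotp x w1 = al1 <-> dotp x w2 = al2).

Definition proper_exposed_face (N : pt -> R) (F : pt -> Prop) : Prop :=
  exists w al, supporting_line N w al /\
    (forall b, F b <-> (unit_ball N b /\ dotp b w = al)).

(* Fermat-Torricelli points of the finite set A (given as a duplicate-free seq) *)
Definition is_FT (N : pt -> R) (A : seq pt) (x : pt) : Prop :=
  forall y, \sum_(a <- A) N (x - a) <= \sum_(a <- A) N (y - a).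

Definition conv (A : seq pt) (x : pt) : Prop :=
  exists l : 'I_(size A) -> R,
    [/\ forall i, 0 <= l i, \sum_i l i = 1 &
        x = \sum_i l i *: (nth 0 A i)].

Definition in_boundary (N : pt -> R) (S : pt -> Prop) (x : pt) : Prop :=
  forall e : R, 0 < e ->
    (exists y, S y /\ N (y - x) < e) /\ (exists z, ~ S z /\ N (z - x) < e).

(* C = {x_1,..,x_m,y_1,..,y_m} (2m distinct points, i.e. C is the disjoint union
   of the pairs) and all (x_i - y_i)/||x_i - y_i|| lie in one proper exposed face *)
Definition double_cluster (N : pt -> R) (C : seq pt) : Prop :=
  exists (m : nat) (x y : 'I_m -> pt),
    perm_eq C ([seq x i | i <- enum 'I_m] ++ [seq y i | i <- enum 'I_m]) /\
    exists F, proper_exposed_face N F /\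
      forall i, F ((N (x i - y i))^-1 *: (x i - y i)).

Definition pseudo_double_cluster (N : pt -> R) (A : seq pt) : Prop :=
  exists (C : seq pt) (c p : pt),
    [/\ uniq C, double_cluster N C, is_FT N C c &
        forall z, z \in A <-> (z \in C \/ z = c \/ z = p)].

End Minkowski.

From HB Require Import structures.
From mathcomp Require Import all_boot all_order all_algebra.
From mathcomp Require Import reals.
From mathcomp Require Import boolp classical_sets.
From mathcomp Require Import ring lra zify.
Set Implicit Arguments. Unset Strict Implicit. Unset Printing Implicit Defensive.
Import Order.TTheory GRing.Theory Num.Theory.
Local Open Scope ring_scope.

(* Let [x] be a Fermat-Torricelli point of [A] on the boundary of [conv A], and
   let [w0] define a supporting line of [conv A] at [x].  Smoothness makes the
   norm differentiable away from the origin, so the norming functionals of the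
   vectors [x - a] (for [a != x]) add up to zero, up to an element of the dual
   unit ball contributed by [a = x] when [x \in A].  All these functionals lie
   in the closed half-plane of the dual cut out by [w0]; those on its boundary
   line are [+-we], where [we] norms the unit vector [u] of the supporting line.
   A counting argument in the dual, using the parity of [#|A|], shows that at
   most one functional lies strictly inside the half-plane and that the [+we]
   and [-we] points balance; pairing these points gives the (pseudo) double
   cluster, whose pairs all point along the exposed face [{b | <b, we> = 1}]. *)

Section Plane.
Variable R : realType.
Notation pt := ('rV[R]_2).
Implicit Types (x y z v w d : pt) (a b : R).

Definition cx (v : pt) : R := v 0 0.
Definition cy (v : pt) : R := v 0 1.
Definition mkpt (a b : R) : pt := \row_(j < 2) (if j == 0 then a else b).
Definition cross (z v : pt) : R := cx z * cy v - cy z * cx v.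
Definition rot90 (z : pt) : pt := mkpt (- cy z) (cx z).

Lemma pt_eq (x y : pt) : cx x = cx y -> cy x = cy y -> x = y.
Proof.
move=> h0 h1; apply/rowP => -[[|[|k]] hk] //.
- by rewrite (_ : Ordinal hk = 0) //; apply/val_inj.
- by rewrite (_ : Ordinal hk = 1) //; apply/val_inj.
Qed.

Lemma cxD x y : cx (x + y) = cx x + cx y. Proof. by rewrite /cx mxE. Qed.
Lemma cyD x y : cy (x + y) = cy x + cy y. Proof. by rewrite /cy mxE. Qed.
Lemma cxZ a x : cx (a *: x) = a * cx x. Proof. by rewrite /cx mxE. Qed.
Lemma cyZ a x : cy (a *: x) = a * cy x. Proof. by rewrite /cy mxE. Qed.
Lemma cxN x : cx (- x) = - cx x. Proof. by rewrite /cx mxE. Qed.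
Lemma cyN x : cy (- x) = - cy x. Proof. by rewrite /cy mxE. Qed.
Lemma cx0 : cx 0 = 0. Proof. by rewrite /cx mxE. Qed.
Lemma cy0 : cy 0 = 0. Proof. by rewrite /cy mxE. Qed.
Lemma cx_mkpt a b : cx (mkpt a b) = a. Proof. by rewrite /cx mxE. Qed.
Lemma cy_mkpt a b : cy (mkpt a b) = b. Proof. by rewrite /cy mxE. Qed.

Definition coordE := (cxD, cyD, cxZ, cyZ, cxN, cyN, cx0, cy0, cx_mkpt, cy_mkpt).

Lemma dotpE x w : dotp x w = cx x * cx w + cy x * cy w.
Proof.
rewrite /dotp big_ord_recr big_ord1 /cx /cy /=.
by congr (_ * _ + _ * _); congr (_ _ _); apply/val_inj.
Qed.

Lemma dotpDl x y w : dotp (x + y) w = dotp x w + dotp y w.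
Proof. rewrite !dotpE !coordE; ring. Qed.
Lemma dotpZl a x w : dotp (a *: x) w = a * dotp x w.
Proof. rewrite !dotpE !coordE; ring. Qed.
Lemma dotpNl x w : dotp (- x) w = - dotp x w.
Proof. rewrite !dotpE !coordE; ring. Qed.
Lemma dotpBl x y w : dotp (x - y) w = dotp x w - dotp y w.
Proof. by rewrite dotpDl dotpNl. Qed.
Lemma dotpNr x w : dotp x (- w) = - dotp x w.
Proof. rewrite !dotpE !coordE; ring. Qed.
Lemma dotp0r x : dotp x 0 = 0.
Proof. rewrite !dotpE !coordE; ring. Qed.
Lemma dotpC x y : dotp x y = dotp y x.
Proof. by rewrite !dotpE mulrC [cy x * _]mulrC. Qed.

Lemma sqr_coord_gt0 z : z != 0 -> 0 < cx z ^+ 2 + cy z ^+ 2.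
Proof.
move=> hz; have [h0|h0] := eqVneq (cx z) 0; last first.
  by apply: ltr_wpDr; [exact: sqr_ge0 | rewrite exprn_even_gt0].
have [h1|h1] := eqVneq (cy z) 0; last by rewrite h0 expr0n add0r exprn_even_gt0.
by move/eqP: hz; case; apply: pt_eq; rewrite ?h0 ?h1 coordE.
Qed.

Lemma dotp_gt0 v : v != 0 -> 0 < dotp v v.
Proof. by move=> hv; rewrite dotpE -!expr2 sqr_coord_gt0. Qed.

Lemma dotp_ge0 v : 0 <= dotp v v.
Proof. by rewrite dotpE addr_ge0 // -expr2 sqr_ge0. Qed.

Lemma cross_rot90 z : cross z (rot90 z) = cx z ^+ 2 + cy z ^+ 2.
Proof. rewrite /cross /rot90 !coordE; ring. Qed.

Lemma dotp_rot90 d w : dotp d (rot90 w) = cross w d.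
Proof. rewrite dotpE /rot90 /cross !coordE; ring. Qed.

Lemma rot90_eq0 w : (rot90 w == 0) = (w == 0).
Proof.
apply/eqP/eqP => [h|->]; last by apply: pt_eq; rewrite /rot90 !coordE ?oppr0.
apply: pt_eq; move: (congr1 cx h) (congr1 cy h); rewrite /rot90 !coordE; lra.
Qed.

Lemma crossC z v : cross z v = - cross v z.
Proof. rewrite /cross; ring. Qed.

Lemma cross_dotp z d v :
  cross z d * dotp v v = dotp z v * cross v d - dotp d v * cross v z.
Proof. rewrite !dotpE /cross; ring. Qed.

(* Cramer's rule in the basis (z, v). *)
Lemma cross_decomp z v y : cross z v != 0 ->
  y = (cross y v / cross z v) *: z + (cross z y / cross z v) *: v.
Proof. by rewrite /cross => hd; apply: pt_eq; rewrite !coordE; field. Qed.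

Lemma cross_eq0_scale z y : z != 0 -> cross z y = 0 -> y = (dotp y z / dotp z z) *: z.
Proof.
move=> hz hc; have hd : cross z (rot90 z) != 0 by rewrite cross_rot90 gt_eqF ?sqr_coord_gt0.
rewrite {1}(cross_decomp y hd) hc mul0r scale0r addr0 cross_rot90.
by congr (_ / _ *: _); rewrite /cross /rot90 !dotpE ?coordE; ring.
Qed.

End Plane.

Section Norm.
Variable R : realType.
Notation pt := ('rV[R]_2).
Variable N : pt -> R.
Hypothesis hN : is_norm N.
Implicit Types (x y z v w : pt) (a c l m : R).

Lemma normZ a x : N (a *: x) = `|a| * N x.
Proof. by case: hN. Qed.
Lemma norm_triangle x y : N (x + y) <= N x + N y.
Proof. by case: hN. Qed.
Lemma norm0 : N 0 = 0.
Proof. by rewrite -(scale0r (0 : pt)) normZ normr0 mul0r. Qed.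
Lemma normN x : N (- x) = N x.
Proof. by rewrite -scaleN1r normZ normrN normr1 mul1r. Qed.
Lemma norm_ge0 x : 0 <= N x.
Proof. by have := norm_triangle x (- x); rewrite subrr norm0 normN; lra. Qed.
Lemma norm_eq0 x : N x = 0 -> x = 0.
Proof. by case: hN => h _ _; apply: h. Qed.
Lemma norm_gt0 x : x != 0 -> 0 < N x.
Proof.
move=> hx; rewrite lt_def norm_ge0 andbT; apply: contra hx => /eqP.
by move/norm_eq0 => ->.
Qed.
Lemma normZ_ge0 a x : 0 <= a -> N (a *: x) = a * N x.
Proof. by move=> ha; rewrite normZ ger0_norm. Qed.

Definition dual_unit (w : pt) := forall y, dotp y w <= N y.
Definition norming (z w : pt) := dual_unit w /\ dotp z w = N z.

Lemma dual_unitN w : dual_unit w -> dual_unit (- w).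
Proof. by move=> hw y; rewrite dotpNr -dotpNl -(normN y) hw. Qed.

Lemma dual_unit_abs w y : dual_unit w -> `|dotp y w| <= N y.
Proof.
move=> hw; rewrite ler_norml hw andbT.
by have := hw (- y); rewrite dotpNl normN lerNl.
Qed.

Lemma norming_neq0 z w : z != 0 -> norming z w -> w != 0.
Proof.
move=> hz [_ e]; apply/eqP => w0; have := norm_gt0 hz.
by rewrite -e w0 dotp0r ltxx.
Qed.

Definition functional_through (z v : pt) (c : R) : pt :=
  mkpt ((cy v * N z - cy z * c) / cross z v) ((cx z * c - cx v * N z) / cross z v).

Lemma functional_through_z z v c : cross z v != 0 ->
  dotp z (functional_through z v c) = N z.
Proof. rewrite /cross => hd; by rewrite dotpE /functional_through /cross !coordE; field. Qed.

Lemma functional_through_v z v c : cross z v != 0 ->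
  dotp v (functional_through z v c) = c.
Proof. rewrite /cross => hd; by rewrite dotpE /functional_through /cross !coordE; field. Qed.

Lemma dual_unit_through z v c : cross z v != 0 ->
  (forall l, c <= N (l *: z + v) - l * N z) ->
  (forall l, l * N z - N (l *: z - v) <= c) -> dual_unit (functional_through z v c).
Proof.
move=> hd hup hlo y; set a := cross y v / cross z v; set b := cross z y / cross z v.
have ey : y = a *: z + b *: v := cross_decomp y hd.
rewrite {1}ey dotpDl !dotpZl functional_through_z // functional_through_v // ey.
have [->|hb0] := eqVneq b 0.
  by rewrite scale0r addr0 mul0r addr0 normZ ler_wpM2r ?norm_ge0 ?ler_norm.
have [hb|hb] := ltP 0 b.
- have ea : a = b * (a / b) by rewrite mulrC divfK ?gt_eqF.
  have -> : a *: z + b *: v = b *: ((a / b) *: z + v).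
    by rewrite scalerDr scalerA -ea.
  rewrite normZ_ge0 ?(ltW hb) // {1}ea -mulrA -mulrDr ler_pM2l //.
  by have := hup (a / b); lra.
- have {hb0} hb : b < 0 by rewrite lt_neqAle hb0.
  have ea : a = - b * (a / - b) by rewrite mulrC divfK ?oppr_eq0 ?lt_eqF.
  have -> : a *: z + b *: v = - b *: ((a / - b) *: z - v).
    by rewrite scalerBr scalerA -ea scaleNr opprK.
  rewrite normZ_ge0 ?oppr_ge0 ?(ltW hb) // {1}ea -mulrA.
  have -> : - b * (a / - b * N z) + b * c = - b * (a / - b * N z - c) by ring.
  by rewrite ler_pM2l ?oppr_gt0 //; have := hlo (a / - b); lra.
Qed.

Lemma triangle_gap z v l m : l * N z - N (l *: z - v) <= N (m *: z + v) - m * N z.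
Proof.
have e : (l + m) *: z = (l *: z - v) + (m *: z + v).
  by rewrite scalerDl addrACA addNr addr0.
have := norm_triangle (l *: z - v) (m *: z + v); rewrite -e normZ => h.
have : (l + m) * N z <= `|l + m| * N z by rewrite ler_wpM2r ?norm_ge0 ?ler_norm.
lra.
Qed.

(* Hahn-Banach in the plane: take the supremum of the lower bounds for [c]. *)
Definition norming_fun (z : pt) : pt :=
  functional_through z (rot90 z)
    (sup [set r | exists l, r = l * N z - N (l *: z - rot90 z)]%classic).

Lemma norming_funP z : z != 0 -> norming z (norming_fun z).
Proof.
move=> hz; have hd : cross z (rot90 z) != 0 by rewrite cross_rot90 gt_eqF // sqr_coord_gt0.
set S := [set r | exists l, r = l * N z - N (l *: z - rot90 z)]%classic.
have hub m : ubound S (N (m *: z + rot90 z) - m * N z) by move=> r [l ->]; exact: triangle_gap.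
split; last exact: functional_through_z.
apply: dual_unit_through => // l.
- by apply: ge_sup => //; exists (0 * N z - N (0 *: z - rot90 z)), 0.
- by apply: ub_le_sup; [exists (N (0 *: z + rot90 z) - 0 * N z); exact: hub | exists l].
Qed.

Section Smooth.
Hypothesis hsm : smooth N.

Lemma norming_uniq z w1 w2 : z != 0 -> norming z w1 -> norming z w2 ->
  forall y, dotp y w1 = dotp y w2.
Proof.
move=> hz [b1 e1] [b2 e2] y; have hNz := norm_gt0 hz.
set u : pt := (N z)^-1 *: z.
have hu : N u = 1 by rewrite normZ_ge0 ?invr_ge0 ?ltW // mulVf // gt_eqF.
have du w : dotp z w = N z -> dotp u w = 1 by rewrite /u dotpZl => ->; rewrite mulVf ?gt_eqF.
have sl w : dual_unit w -> dotp u w = 1 -> supporting_line N w 1.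
  move=> bw duw; split; last by exists u; rewrite /unit_ball hu.
  - by apply: contra_eq_neq duw => ->; rewrite dotp0r eq_sym oner_neq0.
  - by move=> b hb; apply: le_trans (bw b) hb.
have H := hsm hu (sl _ b1 (du _ e1)) (du _ e1) (sl _ b2 (du _ e2)) (du _ e2).
have /H : dotp (u + (y - dotp y w1 *: u)) w1 = 1.
  by rewrite !dotpDl dotpNl dotpZl (du _ e1); ring.
rewrite !dotpDl dotpNl dotpZl (du _ e2); lra.
Qed.

End Smooth.
End Norm.

Lemma big_split_at (V : nmodType) (T : eqType) (s : seq T) (t : T) (F : T -> V) : uniq s ->
  \sum_(a <- s) F a = \sum_(a <- s | a != t) F a + (if t \in s then F t else 0).
Proof.
move=> hu; rewrite (bigID (fun a => a != t)) /=; congr (_ + _).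
rewrite (eq_bigl (pred1 t)) => [|a]; last by rewrite /= negbK.
rewrite -big_filter; case: ifP => hx; first by rewrite filter_pred1_uniq // big_seq1.
by rewrite big1_seq // => a /andP[_]; rewrite mem_filter => /andP[/eqP-> ]; rewrite hx.
Qed.

Section FirstOrder.
Variable R : realType.
Notation pt := ('rV[R]_2).
Variable N : pt -> R.
Hypothesis hN : is_norm N.
Hypothesis hsm : smooth N.
Implicit Types (x y z w : pt) (l c eps : R).

(* Otherwise [functional_through z y (dotp y w + eps)] would be a second norming
   functional of [z]. *)
Lemma smooth_slope_le z w y eps : z != 0 -> norming N z w -> 0 < eps ->
  exists l, N (l *: z + y) - l * N z <= dotp y w + eps.
Proof.
move=> hz [bw ew] he; apply: contrapT => hno.
have hlt l : dotp y w + eps < N (l *: z + y) - l * N z.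
  by rewrite ltNge; apply/negP => h; apply: hno; exists l.
have [hd|hd] := eqVneq (cross z y) 0.
  set k := dotp y z / dotp z z; have ey : y = k *: z := cross_eq0_scale hz hd.
  have e0 : - k *: z + y = 0 by rewrite ey scaleNr addNr.
  have e1 : dotp y w = k * N z by rewrite ey dotpZl ew.
  by have := hlt (- k); rewrite e0 norm0 // e1; lra.
have hw : norming N z (functional_through N z y (dotp y w + eps)).
  split; last exact: functional_through_z.
  apply: dual_unit_through => // l; first exact: ltW.
  by have := bw (l *: z - y); rewrite dotpBl dotpZl ew; lra.
have := norming_uniq hN hsm hz (conj bw ew) hw y.
by rewrite functional_through_v //; lra.
Qed.

(* Convexity of [t |-> N (z + t y)] turns one good slope into the one-sided
   derivative bound. *)
Lemma norm_dir_deriv_le z w y eps : z != 0 -> norming N z w -> 0 < eps ->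
  exists2 del, 0 < del & forall h, 0 < h -> h <= del ->
    N (z + h *: y) <= N z + h * (dotp y w + eps).
Proof.
move=> hz hw he; have [l hl] := smooth_slope_le y hz hw he.
set lam := Num.max l 1; set c := dotp y w + eps in hl *.
have hlam1 : 1 <= lam by rewrite le_max lexx orbT.
have hslope : N (lam *: z + y) - lam * N z <= c.
  have e : lam *: z + y = (l *: z + y) + (lam - l) *: z.
    by rewrite addrAC -scalerDl [l + _]addrC subrK.
  have := norm_triangle hN (l *: z + y) ((lam - l) *: z).
  by rewrite -e normZ_ge0 ?subr_ge0 ?le_max ?lexx //; lra.
exists lam^-1 => [|h hh hhd]; first by rewrite invr_gt0; lra.
have hhl : h * lam <= 1.
  by rewrite -(@mulVf _ lam) ?ler_wpM2r //; lra.
have -> : z + h *: y = (1 - h * lam) *: z + h *: (lam *: z + y).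
  by rewrite scalerDr scalerA addrA -scalerDl subrK scale1r.
have := norm_triangle hN ((1 - h * lam) *: z) (h *: (lam *: z + y)).
rewrite !normZ_ge0 ?subr_ge0 ?(ltW hh) // => h1.
have : h * (N (lam *: z + y) - lam * N z) <= h * c by rewrite ler_wpM2l ?(ltW hh).
nra.
Qed.

Lemma sum_dir_deriv_le x (s : seq pt) y eps : x \notin s -> 0 < eps ->
  exists2 del, 0 < del & forall h, 0 < h -> h <= del ->
    \sum_(a <- s) N (x + h *: y - a) <=
    \sum_(a <- s) N (x - a) +
      h * (\sum_(a <- s) dotp y (norming_fun N (x - a)) + (size s)%:R * eps).
Proof.
move=> + he; elim: s => [|b s IH].
  by exists 1 => // h hh _; rewrite !big_nil mul0r addr0 mulr0 addr0.
rewrite in_cons negb_or => /andP[hxb /IH[d2 hd2 H2]].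
have hb : x - b != 0 by rewrite subr_eq0.
have [d1 hd1 H1] := norm_dir_deriv_le y hb (norming_funP hN hb) he.
exists (Num.min d1 d2) => [|h hh]; first by rewrite lt_min hd1 hd2.
rewrite le_min => /andP[h1 h2]; rewrite !big_cons addrAC.
have := H1 h hh h1; have := H2 h hh h2.
move=> i1 i2; apply: le_trans (lerD i2 i1) _.
by rewrite /= mulrSr le_eqVlt; apply/orP; left; apply/eqP; ring.
Qed.

Lemma ge0_of_eps a n : 0 <= n -> (forall eps, 0 < eps -> 0 <= a + n * eps) -> 0 <= a.
Proof.
move=> hn H; rewrite leNgt; apply/negP => ha.
have hn1 : 0 < n + 1 by lra.
have /H : 0 < - a / (n + 1) by rewrite divr_gt0 ?oppr_gt0.
have -> : a + n * (- a / (n + 1)) = a / (n + 1) by field; rewrite gt_eqF.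
by rewrite pmulr_lge0 ?invr_gt0 // leNgt ha.
Qed.

Lemma FT_first_order (A : seq pt) x : uniq A -> is_FT N A x -> forall y,
  0 <= \sum_(a <- A | a != x) dotp y (norming_fun N (x - a)) +
       (if x \in A then N y else 0).
Proof.
move=> hu hft y; rewrite -big_filter; set A' := [seq a <- A | a != x].
have hxA' : x \notin A' by rewrite mem_filter eqxx.
apply: (@ge0_of_eps _ (size A')%:R) => // eps he.
have [d hd H] := sum_dir_deriv_le y hxA' he.
have := H d hd (lexx d); have := hft (x + d *: y).
rewrite !(big_split_at x _ hu) /A' !big_filter subrr norm0 // addrAC subrr add0r.
rewrite normZ_ge0 ?(ltW hd) // -(pmulr_rge0 _ hd) !mulrDr.
by case: (x \in A); rewrite ?mulr0 ?addr0 => h1 h2; lra.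
Qed.

End FirstOrder.

Lemma seq_argmax (T : eqType) (R : realDomainType) (s : seq T) (f : T -> R) :
  s != [::] -> exists2 m, m \in s & forall a, a \in s -> f a <= f m.
Proof.
elim: s => [//|b s IH] _; have [->|/IH[m hm H]] := eqVneq s [::].
  by exists b; rewrite ?mem_head // => a; rewrite inE => /eqP->.
have [hle|hlt] := leP (f b) (f m).
  by exists m => [|a]; rewrite in_cons ?hm ?orbT // => /orP[/eqP->|/H].
exists b => [|a]; first exact: mem_head.
by rewrite in_cons => /orP[/eqP->//|/H/le_trans]; apply; apply: ltW.
Qed.

Section Cone.
Variable R : realType.
Notation pt := ('rV[R]_2).
Implicit Types (x y v w d : pt).

(* [d1] and [d2] make the smallest angles with [v] on either side of it, and
   the angle from [d1] to [d2] is at least a half-turn; then no [d] lies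
   strictly clockwise of [d1]. *)
Lemma extremal_cross_ge0 v d1 d2 d : v != 0 ->
  0 < cross v d1 -> cross v d2 < 0 -> 0 <= cross d1 d2 ->
  (0 < cross v d -> dotp d v / cross v d <= dotp d1 v / cross v d1) ->
  (cross v d < 0 -> dotp d v / - cross v d <= dotp d2 v / - cross v d2) ->
  (cross v d = 0 -> dotp d v <= 0) ->
  0 <= cross d1 d.
Proof.
move=> hv hP hQ h12 hmax1 hmax2 hcol.
rewrite -(pmulr_lge0 _ (dotp_gt0 hv)) cross_dotp.
set P := cross v d1; set X1 := dotp d1 v; set X := dotp d v.
have [hS|hS|hS] := ltgtP (cross v d) 0.
- have := hmax2 hS; set S := - cross v d; set Q := - cross v d2.
  set p := X / S; set q := dotp d2 v / Q => hpq.
  have hS' : 0 < S by rewrite oppr_gt0.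
  have hQ' : 0 < Q by rewrite oppr_gt0.
  have h2 : 0 <= X1 * cross v d2 - dotp d2 v * P.
    by rewrite -cross_dotp mulr_ge0 // dotp_ge0.
  have eX : X = p * S by rewrite /p divfK ?gt_eqF.
  have eX2 : dotp d2 v = q * Q by rewrite /q divfK ?gt_eqF.
  have -> : X1 * cross v d - X * P = S * (- X1 - p * P) by rewrite eX /S; ring.
  have e2 : X1 * cross v d2 - dotp d2 v * P = Q * (- X1 - q * P) by rewrite eX2 /Q; ring.
  rewrite e2 pmulr_rge0 // in h2; rewrite pmulr_rge0 //.
  have : p * P <= q * P by rewrite ler_wpM2r // ltW.
  lra.
- have := hmax1 hS; set S := cross v d => hpq.
  have -> : X1 * S - X * P = (X1 / P - X / S) * (P * S).
    by field; rewrite !gt_eqF.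
  by apply: mulr_ge0; [rewrite subr_ge0 | apply: mulr_ge0; apply: ltW].
- by rewrite hS mulr0 add0r -mulNr mulr_ge0 ?oppr_ge0 ?hcol ?ltW.
Qed.

Lemma cross_between_decomp v d1 d2 :
  0 < cross v d1 -> cross v d2 < 0 -> cross d1 d2 < 0 ->
  exists l1 l2, [/\ 0 <= l1, 0 <= l2 & v = l1 *: d1 + l2 *: d2].
Proof.
move=> h1 h2 h12; exists (cross v d2 / cross d1 d2), (cross d1 v / cross d1 d2).
have h12' : 0 <= - cross d1 d2 by rewrite oppr_ge0 ltW.
split; last exact: (cross_decomp v (negbT (lt_eqF h12))).
- by rewrite -mulrNN -invrN divr_ge0 // oppr_ge0 ltW.
- by rewrite -mulrNN -invrN crossC opprK divr_ge0 // ltW.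
Qed.

Definition in_cone (A : seq pt) x v :=
  exists2 mu : pt -> R, (forall a, 0 <= mu a) & v = \sum_(a <- A) mu a *: (a - x).

Lemma in_cone0 A x : in_cone A x 0.
Proof. by exists (fun=> 0) => //; rewrite big1 // => a _; rewrite scale0r. Qed.

Lemma in_coneD A x v1 v2 : in_cone A x v1 -> in_cone A x v2 -> in_cone A x (v1 + v2).
Proof.
move=> [m1 h1 ->] [m2 h2 ->]; exists (fun a => m1 a + m2 a) => [a|].
  exact: addr_ge0.
by rewrite -big_split; apply: eq_bigr => a _; rewrite scalerDl.
Qed.

Lemma in_coneZ A x c v : 0 <= c -> in_cone A x v -> in_cone A x (c *: v).
Proof.
move=> hc [m h ->]; exists (fun a => c * m a) => [a|]; first exact: mulr_ge0.
by rewrite scaler_sumr; apply: eq_bigr => a _; rewrite scalerA.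
Qed.

Lemma in_cone_pt A x b : uniq A -> b \in A -> in_cone A x (b - x).
Proof.
move=> hu hb; exists (fun a => (a == b)%:R) => [a|]; first exact: ler0n.
rewrite (big_split_at b _ hu) hb eqxx scale1r big1 ?add0r // => a /negbTE->.
by rewrite scale0r.
Qed.

Lemma in_cone_all (A : seq pt) x : uniq A ->
  (forall w, w != 0 -> exists2 a, a \in A & 0 < dotp (a - x) w) ->
  forall v, in_cone A x v.
Proof.
move=> hu hH v; have [->|hv] := eqVneq v 0; first exact: in_cone0.
have [[a [ha hc hd]]|hno] :=
  pselect (exists a, [/\ a \in A, cross v (a - x) = 0 & 0 < dotp (a - x) v]).
  have hd0 : a - x != 0 by apply: contraTneq hd => ->; rewrite dotpC dotp0r ltxx.
  have hc' : cross (a - x) v = 0 by rewrite crossC hc oppr0.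
  rewrite (cross_eq0_scale hd0 hc'); apply: in_coneZ (in_cone_pt _ hu ha).
  by rewrite divr_ge0 ?dotp_ge0 // dotpC ltW.
have hrv : rot90 v != 0 by rewrite rot90_eq0.
set Dp := [seq a <- A | 0 < cross v (a - x)].
set Dm := [seq a <- A | cross v (a - x) < 0].
have hDp : Dp != [::].
  have [b hb] := hH _ hrv; rewrite dotp_rot90 => hbv.
  by apply/eqP => hD; have := mem_filter (fun a => 0 < cross v (a - x)) b A;
     rewrite -/Dp hD hb hbv.
have hDm : Dm != [::].
  have hrv' : - rot90 v != 0 by rewrite oppr_eq0.
  have [b hb] := hH _ hrv'; rewrite dotpNr dotp_rot90 oppr_gt0.
  by move=> hbv; apply/eqP => hD; have := mem_filter (fun a => cross v (a - x) < 0) b A;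
     rewrite -/Dm hD hb hbv.
have [a1 ha1 H1] := seq_argmax (fun a => dotp (a - x) v / cross v (a - x)) hDp.
have [a2 ha2 H2] := seq_argmax (fun a => dotp (a - x) v / - cross v (a - x)) hDm.
move: ha1 ha2; rewrite !mem_filter => /andP[hp1 hA1] /andP[hm2 hA2].
have [h12|h12] := ltP (cross (a1 - x) (a2 - x)) 0.
  have [l1 [l2 [hl1 hl2 ->]]] := cross_between_decomp hp1 hm2 h12.
  by apply: in_coneD; apply: in_coneZ => //; apply: in_cone_pt.
have [a ha] : exists2 a, a \in A & 0 < dotp (a - x) (- rot90 (a1 - x)).
  apply: hH; rewrite oppr_eq0 rot90_eq0; apply/eqP => h0.
  by move: hp1; rewrite h0 /cross !coordE; lra.
rewrite dotpNr dotp_rot90 oppr_gt0 ltNge => /negP[].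
apply: (extremal_cross_ge0 hv hp1 hm2 h12) => hd.
- by apply: (H1 a); rewrite mem_filter hd.
- by apply: (H2 a); rewrite mem_filter hd.
- by rewrite leNgt; apply/negP => hpos; apply: hno; exists a.
Qed.

End Cone.

Section Interior.
Variable R : realType.
Notation pt := ('rV[R]_2).
Variable N : pt -> R.
Hypothesis hN : is_norm N.
Implicit Types (x y z v w f : pt) (A : seq pt).

(* Two norming functionals [w1], [w2] of [e1] and of [rot90 w1] are linearly
   independent, and [f] is a combination of them. *)
Lemma dotp_norm_bound f : exists2 K, 0 <= K & forall y, `|dotp y f| <= K * N y.
Proof.
set e1 : pt := mkpt 1 0.
have he1 : e1 != 0 by apply/eqP => /(congr1 (@cx _)); rewrite cx_mkpt cx0; lra.
have [bw1 ew1] := norming_funP hN he1; set w1 := norming_fun N e1 in bw1 ew1.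
have hr : rot90 w1 != 0 by rewrite rot90_eq0 (norming_neq0 hN he1 (conj bw1 ew1)).
have [bw2 ew2] := norming_funP hN hr; set w2 := norming_fun N (rot90 w1) in bw2 ew2.
have hd : cross w1 w2 != 0 by rewrite -dotp_rot90 dotpC ew2 gt_eqF ?norm_gt0.
set al := cross f w2 / cross w1 w2; set be := cross w1 f / cross w1 w2.
exists (`|al| + `|be|) => [|y]; first by rewrite addr_ge0.
rewrite dotpC {1}(cross_decomp f hd) -/al -/be dotpDl !dotpZl ![dotp _ y]dotpC mulrDl.
apply: le_trans (ler_normD _ _) _; rewrite (normrM al) (normrM be).
by apply: lerD; apply: ler_wpM2l => //; apply: dual_unit_abs.
Qed.

Lemma in_cone_signed_mass A x v : in_cone A x v -> in_cone A x (- v) ->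
  exists2 M, 0 <= M & forall c, exists2 mu : pt -> R, (forall a, 0 <= mu a) &
    c *: v = \sum_(a <- A) mu a *: (a - x) /\ \sum_(a <- A) mu a <= `|c| * M.
Proof.
move=> [m hm ev] [m' hm' ev'].
have hM : 0 <= \sum_(a <- A) m a by rewrite sumr_ge0.
have hM' : 0 <= \sum_(a <- A) m' a by rewrite sumr_ge0.
exists (\sum_(a <- A) m a + \sum_(a <- A) m' a) => [|c]; first exact: addr_ge0.
have [hc|hc] := leP 0 c.
  exists (fun a => c * m a) => [a|]; first exact: mulr_ge0.
  rewrite ev scaler_sumr -mulr_sumr ger0_norm // ler_wpM2l ?lerDl //.
  by split => //; apply: eq_bigr => a _; rewrite scalerA.
exists (fun a => - c * m' a) => [a|]; first by rewrite mulr_ge0 // oppr_ge0 ltW.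
rewrite -[c *: v]opprK -scalerN -scaleNr ev' scaler_sumr -mulr_sumr ltr0_norm //.
rewrite ler_wpM2l ?oppr_ge0 ?(ltW hc) ?lerDr //.
by split => //; apply: eq_bigr => a _; rewrite scalerA.
Qed.

Lemma in_cone_mass_bound A x : (forall v, in_cone A x v) ->
  exists2 C, 0 <= C & forall y, exists2 mu : pt -> R, (forall a, 0 <= mu a) &
    y = \sum_(a <- A) mu a *: (a - x) /\ \sum_(a <- A) mu a <= C * N y.
Proof.
move=> hC; set e1 : pt := mkpt 1 0; set e2 : pt := mkpt 0 1.
have [M1 hM1 H1] := in_cone_signed_mass (hC e1) (hC (- e1)).
have [M2 hM2 H2] := in_cone_signed_mass (hC e2) (hC (- e2)).
have [K1 hK1 B1] := dotp_norm_bound e1; have [K2 hK2 B2] := dotp_norm_bound e2.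
exists (K1 * M1 + K2 * M2) => [|y]; first by rewrite addr_ge0 ?mulr_ge0.
have [mu1 hmu1 [ey1 hs1]] := H1 (dotp y e1); have [mu2 hmu2 [ey2 hs2]] := H2 (dotp y e2).
exists (fun a => mu1 a + mu2 a) => [a|]; first exact: addr_ge0.
split.
  have -> : y = dotp y e1 *: e1 + dotp y e2 *: e2.
    by apply: pt_eq; rewrite !dotpE !coordE; ring.
  by rewrite ey1 ey2 -big_split; apply: eq_bigr => a _; rewrite scalerDl.
rewrite big_split mulrDl; apply: lerD.
- apply: le_trans hs1 _; rewrite mulrAC ler_wpM2r //.
- apply: le_trans hs2 _; rewrite mulrAC ler_wpM2r //.
Qed.

Lemma conv_of_seq_comb A z (lam : pt -> R) : (forall a, 0 <= lam a) ->
  \sum_(a <- A) lam a = 1 -> z = \sum_(a <- A) lam a *: a -> conv A z.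
Proof.
move=> hl hs ->; exists (fun i => lam (nth 0 A i)); split => //.
- by rewrite -hs (big_nth 0) big_mkord.
- by rewrite (big_nth 0) big_mkord.
Qed.

(* The weights [mu + (1 - S) nu] sum to one. *)
Lemma conv_of_small_mass A x y (mu nu : pt -> R) :
  (forall a, 0 <= mu a) -> y = \sum_(a <- A) mu a *: (a - x) -> \sum_(a <- A) mu a <= 1 ->
  (forall a, 0 <= nu a) -> \sum_(a <- A) nu a *: (a - x) = 0 -> \sum_(a <- A) nu a = 1 ->
  conv A (x + y).
Proof.
move=> hmu ey hS hnu enu snu; set S := \sum_(a <- A) mu a in hS.
set lam := fun a => mu a + (1 - S) * nu a.
have slam : \sum_(a <- A) lam a = 1.
  by rewrite big_split -mulr_sumr snu /= mulr1 -/S addrC subrK.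
have elam : \sum_(a <- A) lam a *: (a - x) = y.
  rewrite /lam; under eq_bigr => a _ do rewrite scalerDl -scalerA.
  by rewrite big_split /= -ey -scaler_sumr enu scaler0 addr0.
apply: (@conv_of_seq_comb _ _ lam) => // [a|]; first by rewrite addr_ge0 ?mulr_ge0 ?subr_ge0.
rewrite -elam (eq_bigr (fun a => lam a *: a - lam a *: x)) => [|a _]; last exact: scalerBr.
by rewrite sumrB -scaler_suml slam scale1r addrC subrK.
Qed.

Lemma in_cone_all_zero_comb A x : (forall v, in_cone A x v) ->
  exists2 nu : pt -> R, (forall a, 0 <= nu a) &
    \sum_(a <- A) nu a *: (a - x) = 0 /\ \sum_(a <- A) nu a = 1.
Proof.
move=> hC; set e1 : pt := mkpt 1 0.
have he1 : e1 != 0 by apply/eqP => /(congr1 (@cx _)); rewrite cx_mkpt cx0; lra.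
have [m1 hm1 ev1] := hC e1; have [m2 hm2 ev2] := hC (- e1).
set M := \sum_(a <- A) (m1 a + m2 a).
have hM1 : 0 < \sum_(a <- A) m1 a.
  rewrite lt_def sumr_ge0 // andbT; apply: contra he1 => /eqP hs.
  rewrite ev1 big_seq big1 // => a ha.
  by move/eqP: hs; rewrite psumr_eq0 // => /allP /(_ a ha) /eqP ->; rewrite scale0r.
have hM : 0 < M.
  rewrite /M big_split /=; have : 0 <= \sum_(a <- A) m2 a by rewrite sumr_ge0.
  lra.
exists (fun a => (m1 a + m2 a) / M) => [a|]; first by rewrite divr_ge0 ?addr_ge0 // ltW.
split; last by rewrite -mulr_suml divff ?gt_eqF.
under eq_bigr => a _ do rewrite mulrC -scalerA scalerDl.
by rewrite -scaler_sumr big_split /= -ev1 -ev2 subrr scaler0.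
Qed.

Lemma interior_of_cone_all A x : (forall v, in_cone A x v) ->
  exists2 e, 0 < e & forall z, N (z - x) < e -> conv A z.
Proof.
move=> hC; have [C hC0 HC] := in_cone_mass_bound hC.
have [nu hnu [enu snu]] := in_cone_all_zero_comb hC.
exists (C + 1)^-1 => [|z hz]; first by rewrite invr_gt0; lra.
have [mu hmu [ey hS]] := HC (z - x).
rewrite -[z](subrK x) addrC; apply: conv_of_small_mass hmu ey _ hnu enu snu.
have h1 : N (z - x) * (C + 1) < 1 by rewrite -ltr_pdivlMr ?mul1r //; lra.
have := norm_ge0 hN (z - x); rewrite mulrDr mulr1 mulrC in h1; lra.
Qed.

Lemma boundary_separation A x : uniq A -> in_boundary N (conv A) x ->
  exists2 w0, w0 != 0 & forall a, a \in A -> dotp a w0 <= dotp x w0.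
Proof.
move=> hu hb; apply: contrapT => hno.
have hH w : w != 0 -> exists2 a, a \in A & 0 < dotp (a - x) w.
  move=> hw; apply: contrapT => hn; apply: hno; exists w => // a ha.
  by rewrite leNgt -subr_gt0 -dotpBl; apply/negP => h; apply: hn; exists a.
have [e he H] := interior_of_cone_all (in_cone_all hu hH).
by have [_ [z [hz /H]]] := hb e he.
Qed.

End Interior.

Lemma sumr_seq_gt0 (R : numDomainType) (T : eqType) (s : seq T) (F : T -> R) :
  s != [::] -> (forall o, o \in s -> 0 < F o) -> 0 < \sum_(o <- s) F o.
Proof.
move=> hs hF; have := @ltr_sum _ _ s (mem s) (fun=> 0) F.
rewrite big1 // -big_seq; apply=> //.
by case: s hs {hF} => // o s _; apply/hasP; exists o; rewrite /= ?inE ?eqxx.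
Qed.

Lemma sumr_seq_ge0 (R : numDomainType) (T : eqType) (s : seq T) (F : T -> R) :
  (forall o, o \in s -> 0 <= F o) -> 0 <= \sum_(o <- s) F o.
Proof. by move=> hF; rewrite big_seq sumr_ge0. Qed.

Lemma sumr_const_seq (V : nmodType) (T : Type) (s : seq T) (x : V) :
  \sum_(o <- s) x = x *+ size s.
Proof. by rewrite big_const_seq count_predT; elim: (size s) => //= n ->; rewrite mulrS. Qed.

(* Coordinates of the dual picture: for each [o], [(a o, b o)] is a functional
   in the open upper half of the dual unit ball, normed by a vector with
   coordinates [(al o, be o)] and norm [nu o]; [(c, h)] is their sum, shifted
   by [p - m] along the horizontal axis, and also lies in the dual unit ball. *)
Section DualCount.
Variables (R : realFieldType) (T : eqType).
Variables (O : seq T) (a b al be nu : T -> R) (c h : R).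
Hypothesis hO : forall o, o \in O -> [/\ -1 < a o, a o < 1, 0 < b o & 0 < be o].
Hypothesis hO' : forall o, o \in O ->
  [/\ `|al o| < nu o, al o * a o + be o * b o = nu o & al o * c + be o * h <= nu o].
Hypothesis hh : h = \sum_(o <- O) b o.
Hypotheses (hc1 : -1 <= c) (hc2 : c <= 1).

Let OR := [seq o <- O | c <= a o].
Let OL := [seq o <- O | ~~ (c <= a o)].
Let d1 : R := \sum_(o <- OR) (1 - a o).
Let d2 : R := \sum_(o <- OL) (1 + a o).

Lemma gap_right o : o \in O ->
  (a o - c) * (nu o - al o) <= be o * ((1 - c) * b o - (1 - a o) * h).
Proof.
move=> ho; have [ha1 ha2 hb hbe] := hO ho; have [hn e1 hq] := hO' ho.
have k : (1 - a o) * (be o * h) <= (1 - a o) * (nu o - al o * c).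
  by rewrite ler_wpM2l; lra.
have -> : be o * ((1 - c) * b o - (1 - a o) * h) =
  (1 - c) * (nu o - al o * a o) - (1 - a o) * (be o * h) by rewrite -e1; ring.
have -> : (a o - c) * (nu o - al o) =
  (1 - c) * (nu o - al o * a o) - (1 - a o) * (nu o - al o * c) by ring.
lra.
Qed.

Lemma gap_left o : o \in O ->
  (c - a o) * (nu o + al o) <= be o * ((1 + c) * b o - (1 + a o) * h).
Proof.
move=> ho; have [ha1 ha2 hb hbe] := hO ho; have [hn e1 hq] := hO' ho.
have k : (1 + a o) * (be o * h) <= (1 + a o) * (nu o - al o * c).
  by rewrite ler_wpM2l; lra.
have -> : be o * ((1 + c) * b o - (1 + a o) * h) =
  (1 + c) * (nu o - al o * a o) - (1 + a o) * (be o * h) by rewrite -e1; ring.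
have -> : (c - a o) * (nu o + al o) =
  (1 + c) * (nu o - al o * a o) - (1 + a o) * (nu o - al o * c) by ring.
lra.
Qed.
Let memOR o : o \in OR -> o \in O /\ c <= a o.
Proof. by rewrite mem_filter => /andP[]. Qed.

Let memOL o : o \in OL -> o \in O /\ a o < c.
Proof. by rewrite mem_filter ltNge => /andP[]. Qed.

Let sum_split (F : T -> R) :
  \sum_(o <- O) F o = \sum_(o <- OR) F o + \sum_(o <- OL) F o.
Proof. by rewrite (bigID (fun o => c <= a o)) /= !big_filter. Qed.

Let h_gt0 : O != [::] -> 0 < h.
Proof. by move=> hne; rewrite hh sumr_seq_gt0 // => o /hO[]. Qed.

Let bOL_le_h : \sum_(o <- OL) b o <= h.
Proof.
rewrite hh sum_split lerDr; apply: sumr_seq_ge0 => o /memOR[/hO[_ _ hb _] _].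
exact: ltW.
Qed.

Let d1_ge0 : 0 <= d1.
Proof. by apply: sumr_seq_ge0 => o /memOR[/hO[_ ha _ _] _]; lra. Qed.

Let d2_gt0 : OL != [::] -> 0 < d2.
Proof. by move=> hne; apply: sumr_seq_gt0 => // o /memOL[/hO[ha _ _ _] _]; lra. Qed.

Let OL_nil_OR : OL = [::] -> OR = O.
Proof.
move=> hOL; rewrite /OR -[RHS](filter_predT O); apply: eq_in_filter => o ho /=.
apply: contraTT isT => hno; have : o \in OL by rewrite mem_filter hno.
by rewrite hOL.
Qed.

Lemma dual_sum_gt_m1 : O != [::] -> -1 < c + d1 - d2.
Proof.
move=> hne; rewrite ltNge; apply/negP => hE.
have hOL : OL = [::].
  have [//|hne'] := eqVneq OL [::]; exfalso.
  set SY := \sum_(o <- OL) ((1 + c) * b o - (1 + a o) * h).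
  have hSY : 0 < SY.
    apply: sumr_seq_gt0 => // o /memOL[ho hlt].
    have [_ _ _ hbe] := hO ho; have [hn _ _] := hO' ho.
    have : 0 < (c - a o) * (nu o + al o).
      by rewrite mulr_gt0 ?subr_gt0 //; move: hn; rewrite ltr_norml; lra.
    by move/lt_le_trans/(_ (gap_left ho)); rewrite pmulr_rgt0.
  have eSY : SY = (1 + c) * \sum_(o <- OL) b o - d2 * h.
    by rewrite /SY sumrB -mulr_sumr -mulr_suml.
  have k1 : (1 + c) * \sum_(o <- OL) b o <= (1 + c) * h.
    by apply: ler_wpM2l; [move: hc1; lra | exact: bOL_le_h].
  have k2 : (1 + c) * h <= d2 * h.
    by apply: ler_wpM2r; [exact: ltW (h_gt0 hne) | have := d1_ge0; lra].
  lra.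
have : 0 < d1.
  by rewrite /d1 OL_nil_OR //; apply: sumr_seq_gt0 => // o /hO[_ ha _ _]; lra.
by rewrite /d2 hOL big_nil in hE; move: hc1; lra.
Qed.

Let right_gap_ge0 o : o \in OR -> 0 <= (1 - c) * b o - (1 - a o) * h.
Proof.
move=> /memOR[ho hle]; have [_ _ _ hbe] := hO ho; have [hn _ _] := hO' ho.
have : 0 <= (a o - c) * (nu o - al o).
  by rewrite mulr_ge0 ?subr_ge0 //; move: hn; rewrite ltr_norml; lra.
by move/le_trans/(_ (gap_right ho)); rewrite pmulr_rge0.
Qed.

Let right_gap_eq0 o : o \in OR -> (1 - c) * b o - (1 - a o) * h = 0 -> a o = c.
Proof.
move=> /memOR[ho hle] h0; have [_ _ _ hbe] := hO ho; have [hn _ _] := hO' ho.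
have := gap_right ho; rewrite h0 mulr0 pmulr_lle0; first by move: hle; lra.
by move: hn; rewrite ltr_norml; lra.
Qed.

Lemma dual_sum_ge1 : O != [::] -> 1 <= c + d1 - d2 ->
  [/\ size O = 1%N, OL = [::] & c + d1 - d2 = 1].
Proof.
move=> hne hE; have hh0 := h_gt0 hne.
set SX := \sum_(o <- OR) ((1 - c) * b o - (1 - a o) * h).
have hSX : 0 <= SX by apply: sumr_seq_ge0.
have eSX : SX = (1 - c) * \sum_(o <- OR) b o - d1 * h.
  by rewrite /SX sumrB -mulr_sumr -mulr_suml.
have k1 : (1 - c) * \sum_(o <- OR) b o <= (1 - c) * h.
  rewrite ler_wpM2l ?subr_ge0 // hh sum_split lerDl.
  by apply: sumr_seq_ge0 => o /memOL[/hO[_ _ hb _] _]; exact: ltW.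
have k2 : (1 - c + d2) * h <= d1 * h by apply: ler_wpM2r; [exact: ltW | lra].
have hd2 : d2 * h <= 0 by rewrite mulrDl in k2; lra.
have hOL : OL = [::].
  have [//|/d2_gt0 hd] := eqVneq OL [::]; exfalso.
  by have := mulr_gt0 hd hh0; lra.
have hd20 : d2 = 0 by rewrite /d2 hOL big_nil.
have hbOR : \sum_(o <- OR) b o = h by rewrite hh sum_split hOL big_nil addr0.
have hSX0 : SX = 0.
  rewrite hd20 addr0 in k2; rewrite hbOR in eSX.
  by apply/eqP; rewrite eq_le hSX andbT eSX subr_le0.
have hac o : o \in OR -> a o = c.
  move=> hoR; apply: right_gap_eq0 => //.
  move/eqP: hSX0; rewrite /SX big_seq psumr_eq0 => [/allP/(_ o hoR)|]; last exact: right_gap_ge0.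
  by rewrite hoR => /eqP.
have hd1 : d1 = 1 - c.
  have e : (1 - c) * h = d1 * h by apply/eqP; rewrite -subr_eq0 -{1}hbOR -eSX hSX0.
  exact/esym/(mulIf (negbT (gt_eqF hh0))).
have ed1 : d1 = (size O)%:R * (1 - c).
  rewrite /d1 (eq_big_seq (fun=> 1 - c)) => [|o /hac ->//].
  by rewrite sumr_const_seq (OL_nil_OR hOL) mulr_natl.
have /hasP[o ho _] : has predT O by rewrite has_predT lt0n size_eq0.
have hc : c < 1 by rewrite -(hac o) ?(OL_nil_OR hOL) //; have [] := hO ho.
split=> //; last by rewrite hd20 hd1; ring.
apply/eqP; rewrite -(eqr_nat R); apply/eqP.
by apply: (mulIf (_ : 1 - c != 0)); rewrite ?subr_eq0 ?gt_eqF // -ed1 hd1 mul1r.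
Qed.

Variables (p m : nat).
Hypothesis hcpm : c = p%:R - m%:R + \sum_(o <- O) a o.
Hypothesis hodd : odd (size O + p + m).

Let dual_sum_nat : c + d1 - d2 = (p + size OR)%:R - (m + size OL)%:R.
Proof.
rewrite /d1 /d2 sumrB big_split /= !sumr_const_seq hcpm (sum_split a) !natrD.
ring.
Qed.

Let size_OR_OL : (size OR + size OL)%N = size O.
Proof. by rewrite !size_filter count_predC. Qed.

Let dual_sum_nat_neq : (p + size OR)%N != (m + size OL)%N.
Proof.
apply: contraTneq hodd => e; rewrite -size_OR_OL.
have -> : (size OR + size OL + p + m = (p + size OR) + (m + size OL))%N by lia.
by rewrite e addnn odd_double.
Qed.

Lemma dual_count :
  [/\ (size O <= 1)%N, size O = 1%N -> p = m & size O = 0%N -> p = m.+1 \/ m = p.+1].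
Proof.
have [hO0|hne] := eqVneq O [::].
  have hc0 : c = p%:R - m%:R by rewrite hcpm hO0 big_nil addr0.
  have hpm : p != m by apply: contraTneq hodd => ->; rewrite hO0 /= addnn odd_double.
  have h1 : (p <= m + 1)%N by rewrite -(ler_nat R) natrD; move: hc2; rewrite hc0; lra.
  have h2 : (m <= p + 1)%N by rewrite -(ler_nat R) natrD; move: hc1; rewrite hc0; lra.
  by rewrite hO0; split => // _; lia.
set P := (p + size OR)%N; set M := (m + size OL)%N.
have hMP : (M + 1 <= P)%N.
  rewrite addn1 ltn_neqAle eq_sym dual_sum_nat_neq /= leqNgt; apply/negP => hlt.
  have := dual_sum_gt_m1 hne; rewrite dual_sum_nat -/P -/M.
  by move: hlt; rewrite -addn1 -(ler_nat R) natrD; lra.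
have [hs1 hOL hE1] : [/\ size O = 1%N, OL = [::] & c + d1 - d2 = 1].
  by apply: dual_sum_ge1 => //; rewrite dual_sum_nat -/P -/M; move: hMP;
     rewrite -(ler_nat R) natrD; lra.
rewrite hs1; split => // _.
have hOR : size OR = 1%N by rewrite -hs1 -size_OR_OL hOL addn0.
move: hE1; rewrite dual_sum_nat /P /M hOR hOL /= !natrD => hE.
have : (p + 0)%:R = m%:R :> R by rewrite natrD; lra.
by move/eqP; rewrite eqr_nat addn0 => /eqP.
Qed.

End DualCount.

Lemma dual_pair_decomp (R : realType) (u s f g y : 'rV[R]_2) :
  dotp u f = 1 -> dotp s f = 0 -> dotp u g = 0 -> dotp s g != 0 ->
  y = dotp y f *: u + (dotp y g / dotp s g) *: s.
Proof.
move=> huf hsf hug hsg.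
have hu : u != 0 by apply: contra_eq_neq huf => ->; rewrite dotpC dotp0r eq_sym oner_neq0.
have hus : cross u s != 0.
  apply: contra hsg => /eqP /(cross_eq0_scale hu) ->.
  by rewrite dotpZl hug mulr0.
set al := cross y s / cross u s; set be := cross u y / cross u s.
have ey : y = al *: u + be *: s := cross_decomp y hus.
by rewrite {2 3}ey !dotpDl !dotpZl huf hsf hug mulr1 !mulr0 addr0 add0r mulfK.
Qed.

Section Clusters.
Variable R : realType.
Notation pt := ('rV[R]_2).
Variable N : pt -> R.
Hypothesis hN : is_norm N.
Variables (u we x : pt).
Hypotheses (hu : N u = 1) (hwe : norming N u we).
Implicit Types (Ml Pl : seq pt).

Lemma norming_face : proper_exposed_face N (fun b => N b <= 1 /\ dotp b we = 1).
Proof.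
have [bwe ewe] := hwe; exists we, 1; split => //; split.
- by apply: contra_eq_neq ewe => ->; rewrite dotp0r hu eq_sym oner_neq0.
- by move=> b hb; apply: le_trans (bwe b) hb.
- by exists u; rewrite /unit_ball hu ewe.
Qed.

(* [ya] is seen from [x] in direction [we], [xa] in the opposite one, so the
   triangle inequality through [x] is an equality. *)
Lemma opposite_pair_face xa ya : ya != x ->
  dotp (x - ya) we = N (x - ya) -> dotp (x - xa) we = - N (x - xa) ->
  N ((N (xa - ya))^-1 *: (xa - ya)) <= 1 /\ dotp ((N (xa - ya))^-1 *: (xa - ya)) we = 1.
Proof.
move=> hyx hy hx; have [bwe _] := hwe.
have ev : xa - ya = (x - ya) - (x - xa) by rewrite opprB [RHS]addrC addrA subrK.
have hd : dotp (xa - ya) we = N (x - ya) + N (x - xa) by rewrite ev dotpBl hx hy opprK.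
have hya : 0 < N (x - ya) by rewrite norm_gt0 // subr_eq0 eq_sym.
have hn1 : N (xa - ya) <= N (x - ya) + N (x - xa).
  by rewrite ev; apply: le_trans (norm_triangle hN _ _) _; rewrite normN.
have := bwe (xa - ya); have := norm_ge0 hN (x - xa); rewrite hd => h1 h2.
have hv : dotp (xa - ya) we = N (xa - ya) by rewrite hd; lra.
have hv0 : N (xa - ya) != 0 by rewrite gt_eqF //; lra.
by rewrite normZ_ge0 ?invr_ge0 ?norm_ge0 // dotpZl hv mulVf.
Qed.

Lemma double_cluster_perm A C : perm_eq A C -> double_cluster N C -> double_cluster N A.
Proof. by move=> hp [m [xs [ys [hC hF]]]]; exists m, xs, ys; rewrite (perm_trans hp hC). Qed.

Lemma map_nth_ord (s : seq pt) n : size s = n ->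
  [seq nth 0 s i | i : 'I_n <- enum 'I_n] = s.
Proof.
move=> hs; have -> : [seq nth 0 s i | i : 'I_n <- enum 'I_n] = map (nth 0 s) (map val (enum 'I_n)).
  by rewrite -map_comp.
by rewrite val_enum_ord -hs -[RHS](mkseq_nth 0).
Qed.

Lemma double_cluster_of_signs Ml Pl : size Ml = size Pl ->
  (forall a, a \in Pl -> a != x /\ dotp (x - a) we = N (x - a)) ->
  (forall b, b \in Ml -> dotp (x - b) we = - N (x - b)) ->
  double_cluster N (Ml ++ Pl).
Proof.
move=> hsz hP hM; exists (size Pl), (fun i => nth 0 Ml i), (fun i => nth 0 Pl i).
split; first by rewrite !map_nth_ord.
exists (fun b => N b <= 1 /\ dotp b we = 1); split; first exact: norming_face.
move=> i; have [hx hy] := hP _ (mem_nth 0 (ltn_ord i)).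
by apply: opposite_pair_face hx hy (hM _ _); rewrite mem_nth // hsz.
Qed.

Lemma FT_of_signs Ml Pl : size Ml = size Pl ->
  (forall a, a \in Pl -> dotp (x - a) we = N (x - a)) ->
  (forall b, b \in Ml -> dotp (x - b) we = - N (x - b)) ->
  is_FT N (Ml ++ Pl) x.
Proof.
move=> hsz hP hM y; rewrite !big_cat /=; have [bwe _] := hwe.
have hsplit a : y - a = (y - x) + (x - a) by rewrite addrA subrK.
have kP : \sum_(a <- Pl) N (x - a) + (size Pl)%:R * dotp (y - x) we <=
    \sum_(a <- Pl) N (y - a).
  rewrite mulr_natl -sumr_const_seq -big_split /= big_seq [leRHS]big_seq.
  by apply: ler_sum => a ha; rewrite -(hP a ha) -dotpDl addrC -hsplit bwe.
have kM : \sum_(a <- Ml) N (x - a) - (size Ml)%:R * dotp (y - x) we <=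
    \sum_(a <- Ml) N (y - a).
  rewrite -mulrN mulr_natl -sumr_const_seq -big_split /= big_seq [leRHS]big_seq.
  apply: ler_sum => a ha; have := dual_unitN hN bwe (y - a).
  by rewrite hsplit dotpNr dotpDl hM // opprD opprK addrC.
by rewrite hsz in kM; lra.
Qed.

Lemma pseudo_double_cluster_of_signs A q Ml Pl : uniq A -> x \in A ->
  perm_eq [seq a <- A | a != x] (q :: Ml ++ Pl) -> size Ml = size Pl ->
  (forall a, a \in Pl -> a != x /\ dotp (x - a) we = N (x - a)) ->
  (forall b, b \in Ml -> dotp (x - b) we = - N (x - b)) ->
  pseudo_double_cluster N A.
Proof.
move=> hA hxA hperm hsz hP hM; exists (Ml ++ Pl), x, q; split.
- by have := filter_uniq (fun a => a != x) hA; rewrite (perm_uniq hperm) => /andP[].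
- exact: double_cluster_of_signs.
- by apply: FT_of_signs => // a /hP[].
move=> z; have := perm_mem hperm z; rewrite mem_filter in_cons => hz.
split.
- case: (eqVneq z x) => [->|hzx] hzA; first by right; left.
  by move: hz; rewrite hzx hzA /= => /esym/orP[/eqP->|]; [right; right | left].
- case=> [hC|[->//|/eqP hzq]].
  + by move: hz; rewrite hC orbT => /andP[].
  + by move: hz; rewrite hzq /= => /andP[].
Qed.

End Clusters.

Section BoundaryFTPoint.
Variable R : realType.
Notation pt := ('rV[R]_2).
Variable N : pt -> R.
Hypothesis hN : is_norm N.
Hypothesis hsm : smooth N.
Variable w0 : pt.
Hypothesis hw0 : w0 != 0.
Implicit Types (y d p : pt).

(* [u] is a unit vector with [<u, w0> = 0], [we] its norming functional, and
   [(u, s)] the basis dual to [(we, w0)] up to the scaling of [s]. *)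
Let u : pt := (N (rot90 w0))^-1 *: rot90 w0.
Let we := norming_fun N u.
Let s := - rot90 we.

Let hu : N u = 1.
Proof.
have hr : 0 < N (rot90 w0) by rewrite norm_gt0 // rot90_eq0.
by rewrite normZ_ge0 // ?invr_ge0 ?ltW // mulVf ?gt_eqF.
Qed.

Let hu0 : u != 0.
Proof. by apply: contra_eq_neq hu => ->; rewrite norm0 // eq_sym oner_neq0. Qed.

Let hwe : norming N u we. Proof. exact: norming_funP. Qed.

Let hue : dotp u we = 1. Proof. by rewrite hwe.2 hu. Qed.

Let hse : dotp s we = 0.
Proof. by rewrite /s dotpNl dotpC dotp_rot90 /cross; ring. Qed.

Let huw0 : dotp u w0 = 0.
Proof. by rewrite /u dotpZl dotpC dotp_rot90 /cross; ring. Qed.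

Let hsw0 : 0 < dotp s w0.
Proof.
have hr : 0 < (N (rot90 w0))^-1 by rewrite invr_gt0 norm_gt0 // rot90_eq0.
have e : dotp s w0 = dotp (rot90 w0) we.
  by rewrite /s dotpNl dotpC dotp_rot90 dotpC dotp_rot90 crossC opprK.
by have := hue; rewrite /u dotpZl -e => h1; rewrite -(pmulr_rgt0 _ hr) h1 ltr01.
Qed.

Let hdec y : y = dotp y we *: u + (dotp y w0 / dotp s w0) *: s.
Proof. exact: dual_pair_decomp hue hse huw0 (lt0r_neq0 hsw0). Qed.

Let dotp_dec y p : dotp y p = dotp y we * dotp u p + (dotp y w0 / dotp s w0) * dotp s p.
Proof. by rewrite {1}(hdec y) dotpDl !dotpZl. Qed.

Let pm_we p := (forall y, dotp y p = dotp y we) \/ (forall y, dotp y p = - dotp y we).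

Let pm_we_s p : pm_we p -> dotp s p = 0.
Proof. by case=> ->; rewrite hse ?oppr0. Qed.

Let norming_pm_we d p : d != 0 -> norming N d p -> `|dotp d we| = N d -> pm_we p.
Proof.
move=> hd hp; have [bwe _] := hwe.
have [hs|hs] := lerP 0 (dotp d we).
  by rewrite ger0_norm // => e; left; apply: (norming_uniq hN hsm hd hp).
rewrite ltr0_norm // => e; right => y; rewrite -dotpNr.
by apply: (norming_uniq hN hsm hd hp); split; [exact: dual_unitN | rewrite dotpNr].
Qed.

(* From [N d = <d, we> <u, p> + mu <s, p>] with [|<u, p>| <= 1]. *)
Let norming_tangent d p : d != 0 -> norming N d p ->
  dotp d w0 / dotp s w0 * dotp s p <= 0 -> pm_we p.
Proof.
move=> hd hp hle; apply: (norming_pm_we hd hp); have [bp ep] := hp.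
have hup : `|dotp u p| <= 1 by rewrite -hu dual_unit_abs.
have hNd : N d <= dotp d we * dotp u p.
  by rewrite -{1}ep (dotp_dec d p) gerDl.
have hX : dotp d we * dotp u p <= `|dotp d we|.
  apply: le_trans (ler_norm _) _; rewrite normrM -[leRHS]mulr1.
  by rewrite ler_wpM2l.
by apply: le_anti; rewrite (dual_unit_abs hN d hwe.1) (le_trans hNd hX).
Qed.

Let norming_s_ge0 d p : d != 0 -> 0 <= dotp d w0 -> norming N d p -> 0 <= dotp s p.
Proof.
move=> hd hd0 hp; rewrite leNgt; apply/negP => hneg.
have hmu : 0 <= dotp d w0 / dotp s w0 by rewrite divr_ge0 // ltW.
have := pm_we_s (norming_tangent hd hp (mulr_ge0_le0 hmu (ltW hneg))).
by move/eqP; rewrite lt_eqF.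
Qed.

Let norming_s_eq0 d p : d != 0 -> norming N d p -> dotp s p = 0 -> pm_we p.
Proof. by move=> hd hp hs; apply: (norming_tangent hd hp); rewrite hs mulr0. Qed.

Let norming_s_gt0 d p : d != 0 -> 0 <= dotp d w0 -> norming N d p -> 0 < dotp s p ->
  [/\ -1 < dotp u p, dotp u p < 1, 0 < dotp d w0 / dotp s w0 & `|dotp d we| < N d].
Proof.
move=> hd hd0 hp hs; have [bp ep] := hp.
have hnot : ~ pm_we p by move/pm_we_s => h0; move: hs; rewrite h0 ltxx.
have := dual_unit_abs hN u bp; rewrite hu ler_norml => /andP[hu1 hu2].
split.
- rewrite lt_neqAle hu1 andbT; apply/eqP => h1; apply: hnot; right => y.
  have hnu : - u != 0 by rewrite oppr_eq0.
  rewrite -dotpNr; apply: (norming_uniq hN hsm hnu); split => //.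
  + by rewrite dotpNl -h1 opprK (normN hN) hu.
  + exact: dual_unitN hwe.1.
  + by rewrite dotpNr dotpNl opprK hue (normN hN) hu.
- rewrite lt_neqAle hu2 andbT; apply/eqP => h1; apply: hnot; left => y.
  by apply: (norming_uniq hN hsm hu0 _ hwe); split => //; rewrite h1 hu.
- rewrite lt_neqAle divr_ge0 ?(ltW hsw0) // andbT; apply/eqP => h0; apply: hnot.
  by apply: (norming_tangent hd hp); rewrite -h0 mul0r.
- have := dual_unit_abs hN d hwe.1; rewrite le_eqVlt => /orP[/eqP h1|//].
  by case: hnot; apply: norming_pm_we h1.
Qed.

Variables (A : seq pt) (x : pt).
Hypotheses (hA : uniq A) (hsep : forall a, a \in A -> dotp a w0 <= dotp x w0).
Hypothesis hft : is_FT N A x.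

(* Sort the points [a != x] by the norming functional [nf a] of [x - a]: [O]
   when it is not [+-we], [P] when it is [we], [M] when it is [-we]. *)
Let A' := [seq a <- A | a != x].
Let nf a := norming_fun N (x - a).
Let O := [seq a <- A' | 0 < dotp s (nf a)].
Let Z := [seq a <- A' | ~~ (0 < dotp s (nf a))].
Let P := [seq a <- Z | 0 < dotp u (nf a)].
Let M := [seq a <- Z | ~~ (0 < dotp u (nf a))].

Let memA' a : a \in A' ->
  [/\ a != x, x - a != 0, 0 <= dotp (x - a) w0 & norming N (x - a) (nf a)].
Proof.
rewrite mem_filter => /andP[hax ha]; have hd : x - a != 0 by rewrite subr_eq0 eq_sym.
by split => //; [rewrite dotpBl subr_ge0 hsep | exact: norming_funP].
Qed.

Let memZ a : a \in Z -> pm_we (nf a).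
Proof.
rewrite mem_filter => /andP[hs /memA'[_ hd hd0 hp]].
apply: (norming_s_eq0 hd hp); apply: le_anti.
by rewrite (norming_s_ge0 hd hd0 hp) andbT leNgt.
Qed.

Let subZ a : a \in Z -> a \in A'. Proof. by rewrite mem_filter => /andP[]. Qed.

Let memP a : a \in P ->
  [/\ a != x, forall y, dotp y (nf a) = dotp y we & dotp (x - a) we = N (x - a)].
Proof.
rewrite mem_filter => /andP[hup haZ]; have [hax _ _ [_ ep]] := memA' (subZ haZ).
have hpw : forall y, dotp y (nf a) = dotp y we.
  by case: (memZ haZ) => // hneg; move: hup; rewrite hneg hue oppr_gt0 ltr10.
by split => //; rewrite -hpw.
Qed.

Let memM a : a \in M ->
  [/\ a != x, forall y, dotp y (nf a) = - dotp y we & dotp (x - a) we = - N (x - a)].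
Proof.
rewrite mem_filter => /andP[hup haZ]; have [hax _ _ [_ ep]] := memA' (subZ haZ).
have hpw : forall y, dotp y (nf a) = - dotp y we.
  by case: (memZ haZ) => // hpos; move: hup; rewrite hpos hue ltr01.
by split => //; rewrite -ep hpw opprK.
Qed.

Let perm_OPM : perm_eq (O ++ P ++ M) A'.
Proof.
apply: perm_trans (permEl (perm_filterC (fun a => 0 < dotp s (nf a)) A')).
by rewrite perm_cat2l; apply: permEl; apply: perm_filterC.
Qed.

Let psi y := \sum_(a <- A') dotp y (nf a).

Let psi_FT y : 0 <= psi y + (if x \in A then N y else 0).
Proof. by rewrite /psi big_filter; apply: FT_first_order. Qed.

Let psiE y :
  psi y = \sum_(a <- O) dotp y (nf a) + ((size P)%:R - (size M)%:R) * dotp y we.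
Proof.
rewrite /psi -(perm_big _ perm_OPM) !big_cat /= mulrBl !mulr_natl -!sumr_const_seq.
rewrite [X in _ + (X + _) = _](eq_big_seq (fun=> dotp y we)) => [|a ha]; last first.
  by have [_ -> _] := memP ha.
rewrite [X in _ + (_ + X) = _](eq_big_seq (fun=> - dotp y we)) => [|a ha].
  by rewrite sumrN.
by have [_ -> _] := memM ha.
Qed.

Let psiN y : psi (- y) = - psi y.
Proof. by rewrite /psi -sumrN; apply: eq_bigr => a _; rewrite dotpNl. Qed.

Let psi_dec y : psi y = dotp y we * psi u + (dotp y w0 / dotp s w0) * psi s.
Proof. by rewrite /psi !mulr_sumr -big_split; apply: eq_bigr => a _; rewrite dotp_dec. Qed.

Lemma FT_notin_double_cluster : x \notin A -> double_cluster N A.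
Proof.
move=> hxA.
have psi0 y : psi y = 0.
  have := psi_FT y; have := psi_FT (- y); rewrite psiN (negbTE hxA) !addr0.
  by move=> h1 h2; apply: le_anti; rewrite h2 -oppr_ge0 h1.
have hO : O = [::].
  have [//|hne] := eqVneq O [::]; have := psi0 s.
  rewrite psiE hse mulr0 addr0 => h0.
  have : 0 < \sum_(a <- O) dotp s (nf a).
    by apply: sumr_seq_gt0 => // a; rewrite mem_filter => /andP[].
  by rewrite h0 ltxx.
have hPM : size M = size P.
  have := psi0 u; rewrite psiE hO big_nil add0r hue mulr1 => /eqP.
  by rewrite subr_eq0 eqr_nat => /eqP.
have hAA' : A' = A by apply/all_filterP/allP => a ha; apply: contraNneq hxA => <-.
apply: (@double_cluster_perm _ _ _ (M ++ P)).
  by rewrite -{1}hAA' perm_sym (perm_trans _ perm_OPM) // hO perm_catC.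
apply: (double_cluster_of_signs (x := x) hN hu hwe hPM).
- by move=> a /memP[hax _ ha]; split.
- by move=> b /memM[_ _ hb].
Qed.

Let signsP a : a \in P -> a != x /\ dotp (x - a) we = N (x - a).
Proof. by case/memP. Qed.

Let signsM b : b \in M -> dotp (x - b) we = - N (x - b).
Proof. by case/memM. Qed.

Section InA.
Hypotheses (hxA : x \in A) (heven : ~~ odd (size A)).

Let psi_le y : psi y <= N y.
Proof. by have := psi_FT (- y); rewrite psiN (normN hN) hxA addrC subr_ge0. Qed.

Let odd_OPM : odd (size O + size P + size M).
Proof.
have hA' : size A' = (size A).-1.
  have := count_predC (fun a => a != x) A.
  rewrite -size_filter (eq_count (a2 := pred1 x)) => [|a]; last by rewrite /= negbK.
  by rewrite count_uniq_mem // hxA => <-; rewrite addn1.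
have : size A = (size O + size P + size M).+1.
  rewrite -addnA -!size_cat (perm_size perm_OPM) hA' prednK //.
  by rewrite lt0n size_eq0; apply: contraTneq hxA => ->.
by move: heven => /[swap] ->; rewrite /= negbK.
Qed.

Let count_OPM :
  [/\ (size O <= 1)%N, size O = 1%N -> size P = size M &
      size O = 0%N -> size P = (size M).+1 \/ size M = (size P).+1].
Proof.
have hc1 : -1 <= psi u by have := psi_le (- u); rewrite psiN (normN hN) hu lerNl.
have hc2 : psi u <= 1 by rewrite -hu psi_le.
have eh : psi s = \sum_(o <- O) dotp s (nf o) by rewrite psiE hse mulr0 addr0.
have ec : psi u = (size P)%:R - (size M)%:R + \sum_(o <- O) dotp u (nf o).
  by rewrite psiE hue mulr1 addrC.
apply: (dual_count (al := fun o => dotp (x - o) we)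
  (be := fun o => dotp (x - o) w0 / dotp s w0) (nu := fun o => N (x - o))
  _ _ eh hc1 hc2 ec odd_OPM) => o;
  rewrite mem_filter => /andP[hs /memA'[_ hd hd0 hp]];
  have [? ? ? ?] := norming_s_gt0 hd hd0 hp hs.
  by split.
by split; rewrite // -?psi_dec ?psi_le // -(dotp_dec (x - o) (nf o)) hp.2.
Qed.

Let pseudo_of_perm q Ml Pl : perm_eq (O ++ P ++ M) (q :: Ml ++ Pl) ->
  size Ml = size Pl -> {subset Ml <= M} -> {subset Pl <= P} ->
  pseudo_double_cluster N A.
Proof.
move=> hp hsz sM sP.
have hp' : perm_eq [seq a <- A | a != x] (q :: Ml ++ Pl).
  by apply: perm_trans hp; rewrite perm_sym perm_OPM.
apply: (pseudo_double_cluster_of_signs hN hu hwe hA hxA hp' hsz).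
- by move=> a /sP /signsP.
- by move=> b /sM /signsM.
Qed.

(* The extra point of the pseudo double cluster is the point of [O], or else
   the surplus point of [P] or of [M]. *)
Lemma FT_in_pseudo_double_cluster : pseudo_double_cluster N A.
Proof.
have [hsz1 hsz_eq hsz0] := count_OPM.
case eO : O hsz1 hsz_eq hsz0 => [|o [|//]] _ hsz_eq hsz0.
- case: (hsz0 erefl) => hsz.
  + case eP : P hsz => [//|q P'] [hsz].
    apply: (@pseudo_of_perm q M P'); rewrite ?eO ?eP //=.
    * by rewrite perm_cons perm_catC.
    * by move=> a ha; rewrite in_cons ha orbT.
  + case eM : M hsz => [//|q M'] [hsz].
    apply: (@pseudo_of_perm q M' P); rewrite ?eO ?eM //=.
    * by rewrite perm_catC.
    * by move=> a ha; rewrite in_cons ha orbT.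
- apply: (@pseudo_of_perm o M P); rewrite ?eO //= ?hsz_eq //.
  by rewrite perm_cons perm_catC.
Qed.

End InA.

End BoundaryFTPoint.

Theorem corollary4p8 (R : realType) (N : 'rV[R]_2 -> R)
  (hN : is_norm N) (hsmooth : smooth N)
  (A : seq 'rV[R]_2) (hA : uniq A) (heven : ~~ odd (size A))
  (hFT : exists x, is_FT N A x /\ in_boundary N (conv A) x) :
  double_cluster N A \/ pseudo_double_cluster N A.
Proof.
have [x [hft hbd]] := hFT.
have [w0 hw0 hsep] := boundary_separation hN hA hbd.
have [hxA|hxA] := boolP (x \in A).
- by right; apply: (FT_in_pseudo_double_cluster hN hsmooth hw0 hA hsep hft).
- by left; apply: (FT_notin_double_cluster hN hsmooth hw0 hA hsep hft).
Qed.
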